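(* Let $m\ge1$ and let $n$ be even. Let $P=\bigoplus_{i=1}^n\mathbf{m}$ be the ordinal sum of $n$ antichains each of size $m$. Then the signed cardinality statistic $SC$ is homomesic under rowmotion on $\mathcal{IC}(P)$, with average $0$ on every orbit.
   Context: For posets $P,Q$, the ordinal sum $P\oplus Q$ has underlying set the disjoint union of $P$ and $Q$, with $x\le y$ iff $x\le_P y$, or $x\le_Q y$, or $x\in P$ and $y\in Q$. $\mathbf{m}$ is an $m$-element antichain. $P=\bigoplus_{i=1}^n\mathbf{m}$ is ranked with the elements of the $i$-th summand (counted from the bottom) having rank $i-1$. A subset $I\subseteq P$ is interval-closed if for all $x,y\in I$ and $z\in P$ with $x\le z\le y$ we have $z\in I$; $\mathcal{IC}(P)$ is the set of interval-closed subsets. For $x\in P$ the toggle $t_x$ sends $I$ to $I\triangle\{x\}$ if that is interval-closed and to $I$ otherwise. Rowmotion is $\mathrm{Row}=t_{x_1}\circ\cdots\circ t_{x_N}$, where $(x_1,\dots,x_N)$ is a linear extension of $P$ (toggling from the top down). $SC(x)=1$ if $\mathrm{rk}(x)$ is even and $-1$ if odd, and $SC(I)=\sum_{x\in I}SC(x)$. A statistic is homomesic ($c$-mesic) if its average over every rowmotion orbit equals the same constant $c$. *)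

From mathcomp Require Import all_boot all_order all_algebra.
Set Implicit Arguments. Unset Strict Implicit. Unset Printing Implicit Defensive.
Import GRing.Theory Num.Theory.

(* The poset P = ordinal sum of n antichains of size m.
   Element (i, j) : 'I_n * 'I_m is the j-th element of the (i+1)-th summand
   counted from the bottom; its rank is i. *)
Section OrdSum.
Variables n m : nat.
Definition elt := ('I_n * 'I_m)%type.

Definition ple (x y : elt) : bool := (x == y) || (val x.1 < val y.1)%N.
Definition plt (x y : elt) : bool := (x != y) && ple x y.

Definition rk (x : elt) : nat := val x.1.

Definition interval_closed (I : {set elt}) : bool :=
  [forall x, forall y, forall z,
     ((x \in I) && (y \in I) && ple x z && ple z y) ==> (z \in I)].

Definition toggle (x : elt) (I : {set elt}) : {set elt} :=
  let J := if x \in I then I :\ x else x |: I in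
  if interval_closed J then J else I.

Definition linear_extension (s : seq elt) : Prop :=
  uniq s /\ (forall x, x \in s) /\
  (forall x y, plt x y -> (index x s < index y s)%N).

(* Row = t_{x_1} o ... o t_{x_N}  (toggling x_N first, i.e. top down) *)
Definition rowmotion (s : seq elt) (I : {set elt}) : {set elt} :=
  foldr toggle I s.

Definition SC_elt (x : elt) : int := if odd (rk x) then (-1)%R else 1%R.
Definition SC (I : {set elt}) : int := (\sum_(x in I) SC_elt x)%R.

Definition homomesic (F : {set elt} -> {set elt}) (f : {set elt} -> int)
  (c : rat) : Prop :=
  forall I : {set elt}, interval_closed I ->
    ((\sum_(J <- orbit F I) (f J)%:~R) / (size (orbit F I))%:R)%R = c.
End OrdSum.

(* Rowmotion toggles the levels of P one after the other from the top, and toggling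
   all elements of one level complements that level if the result is interval-closed
   and does nothing otherwise.  A nonempty interval-closed set I occupies the levels
   lo..hi, all full strictly inside; following the level toggles shows that Row(I)
   complements exactly the levels lo and b, where b = hi if level hi is partial and
   lo < hi, and b = hi + 1 otherwise -- or complements every level when b = n, as it
   also does for I = set0.  Complementing a level with c elements leaves m - c, so
   SC(I) + SC(Row I) = m * sum_q (-1)^q ([lo <= q < b] + [lo < q <= b]), a sum of two
   shifted windows that cancel; when every level is complemented it is
   m * sum_(q < n) (-1)^q = 0 since n is even.  Thus SC(Row I) = - SC(I), and the sum
   of SC over an orbit telescopes to 0. *)

From mathcomp Require Import all_boot all_order all_algebra zify.
Set Implicit Arguments. Unset Strict Implicit. Unset Printing Implicit Defensive.
Import GRing.Theory Num.Theory.

Definition levels_closed (n : nat) (ne fu : nat -> bool) : Prop :=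
  forall p q t, (p < q)%N -> (q < t)%N -> (t < n)%N -> ne p -> ne t -> fu q.

Lemma levels_closed_ext n ne1 fu1 ne2 fu2 :
  (forall q, (q < n)%N -> ne1 q = ne2 q) -> (forall q, (q < n)%N -> fu1 q = fu2 q) ->
  levels_closed n ne1 fu1 <-> levels_closed n ne2 fu2.
Proof.
move=> ene efu; split=> C p q t pq qt tn; have qn := ltn_trans qt tn;
  have pn := ltn_trans pq qn.
  by rewrite -ene // -ene // -efu //; exact: C p q t pq qt tn.
by rewrite ene // ene // efu //; exact: C p q t pq qt tn.
Qed.

Section Levels.
Variables n m : nat.
Local Notation elt := (elt n m).
Local Notation IC := (@interval_closed n m).
Local Notation rk := (@rk n m).
Local Notation ple := (@ple n m).
Local Notation toggle := (@toggle n m).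
Implicit Types (I J K L A B : {set elt}) (x y z : elt) (g : nat -> bool).

Lemma interval_closedP K :
  reflect (forall x y z, x \in K -> y \in K -> ple x z -> ple z y -> z \in K) (IC K).
Proof.
apply: (iffP forallP) => [C x y z xK yK xz zy|C x].
  by move/forallP: (C x) => /(_ y) /forallP /(_ z) /implyP; apply; rewrite xK yK xz zy.
apply/forallP => y; apply/forallP => z; apply/implyP => /andP[/andP[/andP[xK yK] xz] zy].
exact: C xK yK xz zy.
Qed.

Lemma ple_rank x z : ple x z -> x = z \/ (rk x < rk z)%N.
Proof. by case/orP => [/eqP ->|]; [left|right]. Qed.

Definition level_nonempty K q := [exists x in K, rk x == q].
Definition level_full K q := [forall x, (rk x == q) ==> (x \in K)].

Lemma interval_closed_levelsP K :
  reflect (levels_closed n (level_nonempty K) (level_full K)) (IC K).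
Proof.
apply: (iffP (interval_closedP K)) => [C p q t pq qt tn|C x y z xK yK].
  move=> /existsP[x /andP[xK /eqP xp]] /existsP[y /andP[yK /eqP yt]].
  apply/forallP => z; apply/implyP => /eqP zq.
  by apply: (C x y) => //; apply/orP; right; rewrite /rk in xp yt zq; rewrite ?xp ?yt ?zq.
move=> /ple_rank[<- //|xz] /ple_rank[-> //|zy].
have /forallP/(_ z) : level_full K (rk z).
  apply: (C (rk x) _ (rk y)) => //; first exact: ltn_ord.
    by apply/existsP; exists x; rewrite xK eqxx.
  by apply/existsP; exists y; rewrite yK eqxx.
by rewrite eqxx.
Qed.

Lemma level_nonempty_lt K q : level_nonempty K q -> (q < n)%N.
Proof. by case/existsP => x /andP[_ /eqP <-]; exact: ltn_ord. Qed.

Lemma level_nonempty_eq K L q : (forall y, rk y = q -> (y \in K) = (y \in L)) ->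
  level_nonempty K q = level_nonempty L q.
Proof.
move=> e; apply: eq_existsb => y.
by case: (eqVneq (rk y) q) => [/e ->|]; rewrite ?andbF ?andbT.
Qed.

Lemma level_full_eq K L q : (forall y, rk y = q -> (y \in K) = (y \in L)) ->
  level_full K q = level_full L q.
Proof. by move=> e; apply: eq_forallb => y; case: (eqVneq (rk y) q) => // /e ->. Qed.

Definition flip_levels K g := [set x | g (rk x) (+) (x \in K)].

Lemma in_flip_levels K g x : (x \in flip_levels K g) = g (rk x) (+) (x \in K).
Proof. by rewrite inE. Qed.

Lemma eq_flip_levels K g h : g =1 h -> flip_levels K g = flip_levels K h.
Proof. by move=> e; apply/setP => x; rewrite !in_flip_levels e. Qed.

Lemma flip_levels_comp K g h :
  flip_levels (flip_levels K g) h = flip_levels K (fun q => h q (+) g q).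
Proof. by apply/setP => x; rewrite !in_flip_levels addbA. Qed.

Lemma level_nonempty_flip K g q : level_nonempty (flip_levels K g) q =
  if g q then ~~ level_full K q else level_nonempty K q.
Proof.
rewrite /level_nonempty /level_full; case: ifP => gq; rewrite ?negb_forall;
  apply: eq_existsb => x; rewrite in_flip_levels ?negb_imply;
  by case: (eqVneq (rk x) q) => [->|_]; rewrite ?andbF ?andbT ?eqxx ?gq //=.
Qed.

Lemma level_full_flip K g q : level_full (flip_levels K g) q =
  if g q then ~~ level_nonempty K q else level_full K q.
Proof.
rewrite /level_nonempty /level_full negb_exists.
case: ifP => gq; apply: eq_forallb => x; rewrite in_flip_levels;
  by case: (eqVneq (rk x) q) => [->|_] /=; rewrite ?gq ?andbF ?andbT.
Qed.

Definition switch x K := [set y | (y == x) (+) (y \in K)].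

Lemma toggleE x K : toggle x K = if IC (switch x K) then switch x K else K.
Proof.
rewrite /toggle /=; suff -> : (if x \in K then K :\ x else x |: K) = switch x K by [].
by apply/setP => y; case: ifP => xK; rewrite !inE; case: eqVneq => [->|]; rewrite ?xK.
Qed.

Lemma toggles_closed T I : IC I -> IC (foldr toggle I T).
Proof. by elim: T => //= t T IH /IH; rewrite toggleE; case: ifP. Qed.

Lemma switchK x : involutive (switch x).
Proof. by move=> K; apply/setP => y; rewrite !inE addbA addbb. Qed.

Lemma toggleK x J : IC J -> toggle x (toggle x J) = J.
Proof.
move=> ICJ; rewrite [toggle x J]toggleE; case: ifP => ICS; rewrite toggleE.
  by rewrite switchK ICJ.
by rewrite ICS.
Qed.

Lemma rowmotion_inj s : {in IC &, injective (rowmotion s)}.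
Proof.
move=> I1 I2 IC1 IC2; rewrite /rowmotion; elim: s => //= x s IH e; apply: IH.
by rewrite -(toggleK x (toggles_closed s IC1)) e toggleK // toggles_closed.
Qed.

(* Nothing is assumed about [K] on level [r]: that level is never required to
   be full, as [A] and [B] cannot both be full there. *)
Lemma interval_closed_relevel r x A B K :
  IC A -> IC B -> rk x = r -> (x \in A) (+) (x \in B) ->
  (forall y, rk y != r -> (y \in B) = (y \in A)) ->
  (forall y, rk y != r -> (y \in K) = (y \in A)) -> IC K.
Proof.
move=> /interval_closed_levelsP CA /interval_closed_levelsP CB xr xAB BA KA.
have off_ne L q : (forall y, rk y != r -> (y \in L) = (y \in A)) -> q != r ->
    level_nonempty L q = level_nonempty A q.
  by move=> LA qr; apply: level_nonempty_eq => y yq; rewrite LA // yq.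
have off_full L q : (forall y, rk y != r -> (y \in L) = (y \in A)) -> q != r ->
    level_full L q = level_full A q.
  by move=> LA qr; apply: level_full_eq => y yq; rewrite LA // yq.
have neAB : level_nonempty A r || level_nonempty B r.
  case xA: (x \in A) xAB => /= xB; apply/orP; [left|right];
    by apply/existsP; exists x; rewrite xr eqxx andbT.
apply/interval_closed_levelsP => p q t pq qt tn neKp neKt.
case: (eqVneq q r) => [qr|qr].
  have [pr tr] : p != r /\ t != r by split; apply/eqP; lia.
  rewrite !off_ne // in neKp neKt.
  have := CB p q t pq qt tn; rewrite !(off_ne B) // => /(_ neKp neKt).
  move: (CA p q t pq qt tn neKp neKt) => /forallP/(_ x) + /forallP/(_ x).
  by rewrite xr qr eqxx /= => xA xB; move: xAB; rewrite xA xB.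
rewrite off_full //.
have both u : u != r -> level_nonempty K u -> level_nonempty A u && level_nonempty B u.
  by move=> ur neKu; rewrite (off_ne B) // -(off_ne K u) // neKu.
have /orP[/andP[Ap At]|/andP[Bp Bt]] :
    (level_nonempty A p && level_nonempty A t) || (level_nonempty B p && level_nonempty B t).
  case: (eqVneq p r) => [pr|pr]; last case: (eqVneq t r) => [tr|tr].
  - have /andP[At Bt] : level_nonempty A t && level_nonempty B t by apply: both => //; lia.
    by rewrite pr; case/orP: neAB => ->; rewrite ?At ?Bt ?orbT.
  - have /andP[Ap Bp] := both p pr neKp.
    by rewrite tr; case/orP: neAB => ->; rewrite ?Ap ?Bp ?orbT.
  - by have /andP[-> _] := both p pr neKp; have /andP[-> _] := both t tr neKt.
- exact: CA pq qt tn Ap At.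
- by rewrite -(off_full B) //; exact: CB pq qt tn Bp Bt.
Qed.

Lemma foldr_toggle_level r T J : uniq T -> all (fun y => rk y == r) T -> IC J ->
  foldr toggle J T =
  if IC (flip_levels J (fun q => q == r)) then [set y | (y \in T) (+) (y \in J)] else J.
Proof.
move=> + + ICJ; elim: T => [|t T IH] /=.
  by move=> _ _; case: ifP => // _; apply/setP => y; rewrite inE.
case/andP=> tT uT /andP[/eqP tr rT]; rewrite IH //.
have offT y : rk y != r -> (y \in t :: T) = false.
  by apply: contraNF; rewrite in_cons => /orP[/eqP ->|/(allP rT)/eqP ->]; rewrite ?tr eqxx.
case: ifP => [CF|NF]; rewrite toggleE.
  set K := [set y | _ (+) _].
  have -> : switch t K = [set y | (y \in t :: T) (+) (y \in J)].
    apply/setP => y; rewrite !inE; case: eqVneq => [->|] //=.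
    by rewrite (negbTE tT).
  rewrite ifT //; apply: (interval_closed_relevel (r := r) (x := t) ICJ CF) => //.
  - by rewrite in_flip_levels /= tr eqxx; case: (t \in J).
  - by move=> y /negbTE yr; rewrite in_flip_levels /= yr.
  - by move=> y yr; rewrite inE offT.
rewrite ifN //; apply: contraFN NF => CS.
apply: (interval_closed_relevel (r := r) (x := t) ICJ CS) => //.
- by rewrite inE eqxx; case: (t \in J).
- by move=> y yr; rewrite inE; case: eqVneq => // yt; move: yr; rewrite yt tr eqxx.
- by move=> y /negbTE yr; rewrite in_flip_levels /= yr.
Qed.

Lemma pairwise_rank (u : seq elt) : uniq u ->
  {in u &, forall x y, (rk y < rk x)%N -> (index y u < index x u)%N} ->
  pairwise (fun x y => rk x <= rk y)%N u.
Proof.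
elim: u => //= x u IH /andP[xu uu] lin; apply/andP; split.
  apply/allP => y yu; rewrite leqNgt; apply/negP => /(lin x y).
  by rewrite !in_cons eqxx yu orbT /= ltn0 => /(_ isT isT).
apply: IH => // a b au bu ba; have := lin a b; rewrite !in_cons au bu !orbT /=.
have [xb | _] := eqVneq x b; first by move: xu; rewrite xb bu.
by have [xa | _] := eqVneq x a; [move: xu; rewrite xa au | apply].
Qed.

Lemma rank_filter_cat (u : seq elt) k : pairwise (fun x y => rk x <= rk y)%N u ->
  [seq x <- u | (rk x < k)%N] ++ [seq x <- u | (k <= rk x)%N] = u.
Proof.
elim: u => // x u IH; rewrite pairwise_cons => /andP[xu pu] /=.
case: ltnP => xk /=; first by rewrite IH.
suff E : [seq y <- u | (rk y < k)%N] = [::] by move: (IH pu); rewrite E /= => ->.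
apply/eqP; rewrite -(negbK (_ == _)) -has_filter -all_predC.
by apply/allP => y /(allP xu) /= xy; rewrite -leqNgt (leq_trans xk xy).
Qed.

Section Rowmotion.
Variable s : seq elt.
Hypothesis hs : linear_extension s.

Definition toggle_from r I := foldr toggle I [seq x <- s | (r <= rk x)%N].

Lemma toggle_from_top I : toggle_from n I = I.
Proof.
rewrite /toggle_from (eq_filter (a2 := pred0)) ?filter_pred0 // => x.
by rewrite /= leqNgt ltn_ord.
Qed.

Lemma toggle_from0 I : toggle_from 0 I = rowmotion s I.
Proof. by rewrite /toggle_from (eq_filter (a2 := predT)) ?filter_predT. Qed.

Lemma toggle_fromS r I : IC I ->
  toggle_from r I = if IC (flip_levels (toggle_from r.+1 I) (fun q => q == r))
    then flip_levels (toggle_from r.+1 I) (fun q => q == r) else toggle_from r.+1 I.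
Proof.
move=> ICI; case: hs => us [alls lin].
have sorted_s : pairwise (fun x y => rk x <= rk y)%N s.
  apply: pairwise_rank => // x y _ _ yx; apply: lin.
  by rewrite /plt /ple yx orbT andbT; apply: contraTneq yx => ->; rewrite ltnn.
rewrite /toggle_from -(rank_filter_cat r.+1 (pairwise_filter _ sorted_s)) foldr_cat.
rewrite -!filter_predI.
have -> : [seq x <- s | predI (fun x => r.+1 <= rk x) (fun x => r <= rk x) x]%N
          = [seq x <- s | r.+1 <= rk x]%N by apply: eq_filter => x /=; case: ltngtP.
have -> : [seq x <- s | predI (fun x => rk x < r.+1) (fun x => r <= rk x) x]%N
          = [seq x <- s | rk x == r] by apply: eq_filter => x /=; rewrite ltnS eqn_leq andbC.
rewrite (@foldr_toggle_level r) ?filter_uniq ?filter_all ?toggles_closed //=.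
by case: ifP => // _; apply/setP => y; rewrite in_flip_levels inE mem_filter alls andbT.
Qed.

Lemma rowmotion_flip_levels fl I : IC I ->
  (forall r, (r <= n)%N -> IC (flip_levels I (fun q => (r <= q)%N && fl q))) ->
  (forall r, (r < n)%N -> ~~ fl r ->
     ~~ IC (flip_levels I (fun q => (q == r) (+) ((r < q)%N && fl q)))) ->
  rowmotion s I = flip_levels I fl.
Proof.
move=> ICI closed_above not_closed.
suff from_top k : (k <= n)%N ->
    toggle_from (n - k) I = flip_levels I (fun q => (n - k <= q)%N && fl q).
  by have := from_top n (leqnn n); rewrite subnn toggle_from0 => ->; apply: eq_flip_levels.
elim: k => [_|k IH kn].
  by rewrite subn0 toggle_from_top; apply/setP => x; rewrite in_flip_levels leqNgt ltn_ord.
have rS : (n - k = (n - k.+1).+1)%N by rewrite subnSK.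
rewrite toggle_fromS // -rS (IH (ltnW kn)) !flip_levels_comp rS; set r := (n - k.+1)%N.
have [flr|flr] := boolP (fl r).
  have E : (fun q => (q == r) (+) ((r < q)%N && fl q)) =1 (fun q => (r <= q)%N && fl q).
    by move=> q /=; case: (ltngtP r q) => // <-; rewrite flr.
  by rewrite (eq_flip_levels _ E) closed_above // leq_subr.
have E : (fun q => (r < q)%N && fl q) =1 (fun q => (r <= q)%N && fl q).
  by move=> q; case: (ltngtP r q) => // <-; rewrite (negbTE flr).
rewrite (negbTE (not_closed r _ flr)); last by rewrite /r ltn_subrL (leq_ltn_trans _ kn).
exact: eq_flip_levels.
Qed.

Lemma rowmotion_set0 : rowmotion s set0 = flip_levels set0 predT.
Proof.
apply: rowmotion_flip_levels => [|r _|//].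
  by apply/interval_closedP => x y z; rewrite inE.
apply/interval_closedP => x y z; rewrite !in_flip_levels !inE !addbF /= !andbT.
by move=> rx _ /ple_rank[<- //|xz] _; exact: leq_trans rx (ltnW xz).
Qed.
End Rowmotion.
End Levels.

Definition window (lo b q : nat) : nat := (lo <= q < b) + (lo < q <= b).

Section LevelProfile.
Variables (n lo hi : nat) (full_lo full_hi : bool).
Hypotheses (lo_le_hi : lo <= hi) (hi_lt_n : hi < n).

Definition profile_nonempty q := lo <= q <= hi.
(* When [lo = hi] the single occupied level is described by [full_lo] alone. *)
Definition profile_full q :=
  [|| lo < q < hi, (q == lo) && full_lo | (lo < q) && (q == hi) && full_hi].

(* The levels complemented by rowmotion: [lo] and [top_flip], or all of them when
   [top_flip = n]. *)
Definition top_flip := hi + (full_hi || (lo == hi)).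
Definition flipped q := [|| top_flip == n, q == lo | q == top_flip].

Definition flip_nonempty g q := if g q then ~~ profile_full q else profile_nonempty q.
Definition flip_full g q := if g q then ~~ profile_nonempty q else profile_full q.

Lemma flip_profile_closed r :
  levels_closed n (flip_nonempty (fun q => (r <= q) && flipped q))
                  (flip_full (fun q => (r <= q) && flipped q)).
Proof.
move=> p q t pq qt tn.
rewrite /flip_nonempty /flip_full /flipped /top_flip /profile_nonempty /profile_full.
case: full_lo; case: full_hi; case: (ltngtP lo hi) lo_le_hi => //= lh _;
  repeat case: ifP => /=; lia.
Qed.

Lemma flip_profile_not_closed r : r < n -> ~~ flipped r ->
  ~ levels_closed n (flip_nonempty (fun q => (q == r) (+) ((r < q) && flipped q)))
                    (flip_full (fun q => (q == r) (+) ((r < q) && flipped q))).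
Proof.
move=> rn nfl closed.
pose g q := (q == r) (+) ((r < q) && flipped q).
suff [p [q [t [pq qt tn [nep net nfuq]]]]] : exists p q t, [/\ p < q, q < t, t < n &
    [/\ flip_nonempty g p, flip_nonempty g t & ~~ flip_full g q]].
  by move/negP: nfuq; apply; exact: (closed p q t).
have [br|br] := ltnP top_flip r; [exists lo, r.-1, r | have [lr|lr] := ltnP lo r;
  [exists lo, r, top_flip | exists r, lo, top_flip]].
all: move: nfl br.
all: rewrite /g /flip_nonempty /flip_full /flipped /top_flip /profile_nonempty /profile_full.
all: case: full_lo; case: full_hi => /=; case: (ltngtP lo hi) lo_le_hi => //= lh _ nfl br.
all: do !split; repeat case: ifP => /=; lia.
Qed.

Lemma top_flip_lt : top_flip != n -> top_flip < n.
Proof. by rewrite /top_flip; case: (_ || _); lia. Qed.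

Lemma unflipped_profile q : ~~ flipped q -> profile_nonempty q = profile_full q.
Proof.
rewrite /flipped /top_flip /profile_nonempty /profile_full.
by case: full_lo; case: full_hi; case: (ltngtP lo hi) lo_le_hi => //= lh _; lia.
Qed.

Lemma window_profile q : top_flip != n ->
  window lo top_flip q = if flipped q then 1 else 2 * profile_full q.
Proof.
rewrite /window /flipped /top_flip /profile_full.
by case: full_lo; case: full_hi; case: (ltngtP lo hi) lo_le_hi => //= lh _; case: ifP; lia.
Qed.
End LevelProfile.

Local Open Scope ring_scope.

Lemma sum_sign (N : nat) : \sum_(q < N) (-1) ^+ q = (odd N)%:Z.
Proof.
elim: N => [|N IH]; first by rewrite big_ord0.
by rewrite big_ord_recr /= IH -signr_odd; case: odd.
Qed.

Lemma sum_sign_window (lo b N : nat) : (b < N)%N ->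
  \sum_(q < N) (-1) ^+ q * (window lo b q)%:Z = 0.
Proof.
case: N => // N; rewrite ltnS => bN.
under eq_bigr do rewrite PoszD mulrDr.
rewrite big_split big_ord_recr big_ord_recl /= ltnNge bN andbF mulr0 addr0 mulr0 add0r.
rewrite -big_split /=; apply: big1 => q _.
by rewrite /bump /= add1n exprS ltnS mulN1r mulNr addrN.
Qed.

Section Counting.
Variables n m : nat.
Local Notation elt := (elt n m).
Local Notation rk := (@rk n m).
Implicit Types (K : {set elt}) (g : nat -> bool).

Definition level q : {set elt} := [set x | rk x == q].
Definition level_card K q := #|K :&: level q|.

Lemma card_level q : (q < n)%N -> #|level q| = m.
Proof.
move=> qn; have -> : level q = setX [set Ordinal qn] setT.
  by apply/setP => x; rewrite !inE andbT -val_eqE.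
by rewrite cardsX cards1 cardsT card_ord mul1n.
Qed.

Lemma SC_levels K : SC K = \sum_(q < n) (-1) ^+ q * (level_card K q)%:Z.
Proof.
rewrite /SC (partition_big (fun x : elt => x.1) predT) //=; apply: eq_bigr => q _.
rewrite (eq_bigr (fun _ => (-1) ^+ q)); last first.
  by move=> x /andP[_ /eqP <-]; rewrite /SC_elt -signr_odd; case: odd.
rewrite (eq_bigl [in K :&: level q]); last first.
  by move=> x; rewrite !inE /rk; congr (_ && _); apply/eqP/eqP => [->|/val_inj].
by rewrite sumr_const pmulrn -mulrzr intz.
Qed.

Lemma level_card_flip K g q : (q < n)%N ->
  level_card (flip_levels K g) q = if g q then (m - level_card K q)%N else level_card K q.
Proof.
move=> qn; rewrite /level_card; case: ifP => gq.
  suff -> : flip_levels K g :&: level q = level q :\: K by rewrite cardsD card_level // setIC.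
  by apply/setP => x; rewrite !inE; case: eqVneq => [->|]; rewrite ?gq ?andbF.
apply: eq_card => x.
by rewrite !inE; case: eqVneq => [->|]; rewrite ?gq ?andbF.
Qed.

Lemma level_card_le K q : (q < n)%N -> (level_card K q <= m)%N.
Proof. by move=> qn; rewrite -(card_level qn) subset_leq_card // subsetIr. Qed.

Lemma SC_add_flip K g : SC K + SC (flip_levels K g) =
  \sum_(q < n) (-1) ^+ q * (if g q then m else (level_card K q).*2)%:Z.
Proof.
rewrite !SC_levels -big_split /=; apply: eq_bigr => q _.
rewrite -mulrDr -PoszD level_card_flip //; case: ifP => _; last by rewrite addnn.
by rewrite subnKC // level_card_le.
Qed.

Lemma SC_flip_all K : ~~ odd n -> SC (flip_levels K predT) = - SC K.
Proof.
move=> n_even; apply/eqP; rewrite -addr_eq0 addrC SC_add_flip /=.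
by rewrite -big_distrl sum_sign (negbTE n_even) /= mul0r.
Qed.

Lemma level_card_full K q : (q < n)%N -> level_full K q -> level_card K q = m.
Proof.
move=> qn /forallP Kq; rewrite /level_card -[RHS](card_level qn); apply: eq_card => x.
by rewrite !inE; case: eqVneq => [xq|]; rewrite ?andbF ?andbT //; move: (Kq x); rewrite xq eqxx.
Qed.

Lemma level_card_empty K q : ~~ level_nonempty K q -> level_card K q = 0%N.
Proof.
rewrite negb_exists => /forallP Kq; apply/eqP; rewrite cards_eq0; apply/eqP/setP => x.
by rewrite !inE; move: (Kq x); case: (x \in K); case: (rk x == q).
Qed.
End Counting.

Section SignedCardinality.
Variables n m : nat.
Hypotheses (m_gt0 : (0 < m)%N) (n_even : ~~ odd n).
Local Notation elt := (elt n m).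
Local Notation IC := (@interval_closed n m).
Local Notation rk := (@rk n m).
Implicit Types (I K : {set elt}).

Lemma level_full_nonempty K q : (q < n)%N -> level_full K q -> level_nonempty K q.
Proof.
move=> qn /forallP/(_ (Ordinal qn, Ordinal m_gt0)) Kx.
by apply/existsP; exists (Ordinal qn, Ordinal m_gt0); move: Kx; rewrite /rk /= eqxx /= => ->.
Qed.

Lemma interval_closed_profile I : IC I -> I != set0 ->
  exists lo hi, [/\ (lo <= hi)%N, (hi < n)%N,
    forall q, (q < n)%N -> level_nonempty I q = profile_nonempty lo hi q &
    forall q, (q < n)%N ->
      level_full I q = profile_full lo hi (level_full I lo) (level_full I hi) q].
Proof.
move=> /interval_closed_levelsP ICI /set0Pn[x0 x0I].
have ex : exists q, level_nonempty I q.
  by exists (rk x0); apply/existsP; exists x0; rewrite x0I /=.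
have bnd q : level_nonempty I q -> (q <= n.-1)%N by move/level_nonempty_lt; case: n.
case: (ex_minnP ex) => lo loI lo_min; case: (ex_maxnP ex bnd) => hi hiI hi_max.
have lohi := lo_min _ hiI; have hin := level_nonempty_lt hiI.
have inner q : (lo < q < hi)%N -> level_full I q.
  by case/andP => loq qhi; apply: (ICI lo q hi).
have neE q : (q < n)%N -> level_nonempty I q = profile_nonempty lo hi q.
  move=> qn; apply/idP/idP => [qI|/andP[loq qhi]].
    by rewrite /profile_nonempty lo_min ?hi_max.
  case: (ltngtP lo q) loq => // [loq _|<-] //; case: (ltngtP q hi) qhi => // [qhi _|->] //.
  by apply: level_full_nonempty => //; apply: inner; rewrite loq qhi.
exists lo, hi; split => // q qn; rewrite /profile_full.
have [loq|qlo|<-] := ltngtP lo q; rewrite /=; last by rewrite orbF.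
  have [qhi|hiq|->] := ltngtP q hi; rewrite /= ?orbF //; first by apply: inner; rewrite loq qhi.
  apply/negbTE/negP => /(level_full_nonempty qn).
  by rewrite neE // /profile_nonempty (leqNgt q hi) hiq andbF.
apply/negbTE/negP => /(level_full_nonempty qn).
by rewrite neE // /profile_nonempty leqNgt qlo.
Qed.

Section Profiled.
Variables (I : {set elt}) (lo hi : nat).
Hypotheses (lo_le_hi : (lo <= hi)%N) (hi_lt_n : (hi < n)%N).
Local Notation full_lo := (level_full I lo).
Local Notation full_hi := (level_full I hi).
Hypotheses (nonemptyE : forall q, (q < n)%N -> level_nonempty I q = profile_nonempty lo hi q)
  (fullE : forall q, (q < n)%N -> level_full I q = profile_full lo hi full_lo full_hi q).

Lemma interval_closed_flip_profile g : IC (flip_levels I g) <->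
  levels_closed n (flip_nonempty lo hi full_lo full_hi g) (flip_full lo hi full_lo full_hi g).
Proof.
have E1 q : (q < n)%N ->
    level_nonempty (flip_levels I g) q = flip_nonempty lo hi full_lo full_hi g q.
  by move=> qn; rewrite level_nonempty_flip /flip_nonempty nonemptyE // fullE.
have E2 q : (q < n)%N ->
    level_full (flip_levels I g) q = flip_full lo hi full_lo full_hi g q.
  by move=> qn; rewrite level_full_flip /flip_full nonemptyE // fullE.
by split => [/interval_closed_levelsP/(levels_closed_ext E1 E2)|
  /(levels_closed_ext E1 E2)/interval_closed_levelsP].
Qed.

Lemma rowmotion_profile s : linear_extension s -> IC I ->
  rowmotion s I = flip_levels I (flipped n lo hi full_hi).
Proof.
move=> hs ICI; apply: rowmotion_flip_levels => // r.
  by move=> _; apply/interval_closed_flip_profile; exact: flip_profile_closed.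
by move=> rn nfl; apply/negP => /interval_closed_flip_profile; exact: flip_profile_not_closed.
Qed.

Lemma level_card_unflipped q : (q < n)%N -> ~~ flipped n lo hi full_hi q ->
  level_card I q = (m * profile_full lo hi full_lo full_hi q)%N.
Proof.
move=> qn unfl; have := unflipped_profile full_lo lo_le_hi hi_lt_n unfl.
rewrite -nonemptyE // -fullE //; case: (boolP (level_full I q)) => [fullq _|_ ne_q].
  by rewrite level_card_full // muln1.
by rewrite level_card_empty ?ne_q // muln0.
Qed.

Lemma SC_flip_profile : top_flip lo hi full_hi != n ->
  SC (flip_levels I (flipped n lo hi full_hi)) = - SC I.
Proof.
move=> no_wrap; apply/eqP; rewrite -addr_eq0 addrC SC_add_flip.
rewrite (eq_bigr (fun q : 'I_n =>
    (-1) ^+ q * (window lo (top_flip lo hi full_hi) q)%:Z * m%:Z)).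
  by rewrite -big_distrl /= sum_sign_window ?top_flip_lt // mul0r.
move=> q _; rewrite -mulrA -PoszM (window_profile full_lo lo_le_hi hi_lt_n) //.
case: ifP => [_|/negbT unfl]; first by rewrite mul1n.
by rewrite level_card_unflipped // -mul2n mulnCA mulnC.
Qed.
End Profiled.

Lemma SC_rowmotion s I : linear_extension s -> IC I -> SC (rowmotion s I) = - SC I.
Proof.
move=> hs ICI; have [->|I0] := eqVneq I set0; first by rewrite rowmotion_set0 // SC_flip_all.
have [lo [hi [lohi hin neE fuE]]] := interval_closed_profile ICI I0.
rewrite (rowmotion_profile lohi hin neE fuE) //.
have [wrap|] := eqVneq (top_flip lo hi (level_full I hi)) n; last exact: SC_flip_profile.
rewrite (@eq_flip_levels _ _ _ _ predT) ?SC_flip_all // => q.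
by rewrite /flipped wrap eqxx.
Qed.
End SignedCardinality.

Lemma sum_orbit_eq0 (T : finType) (R : numDomainType) (F : T -> T) (D : {pred T})
    (f : T -> R) :
  {homo F : x / x \in D} -> {in D &, injective F} -> {in D, forall x, f (F x) = - f x} ->
  {in D, forall x, \sum_(y <- orbit F x) f y = 0}.
Proof.
move=> FD Finj fF x xD.
have telescope k y : y \in D -> (\sum_(z <- traject F y k) f z) *+ 2 = f y - f (iter k F y).
  elim: k y => [|k IH] y yD; first by rewrite big_nil mul0rn subrr.
  by rewrite /= big_cons mulrnDl IH ?FD // -iterSr fF // mulr2n -addrA addNKr.
have := telescope (order F x) x xD; rewrite (iter_order_in FD Finj xD) subrr => /eqP.
by rewrite mulrn_eq0 /= => /eqP.
Qed.

Theorem theorem3p18 (m n : nat) (hm : (1 <= m)%N) (hn : ~~ odd n)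
  (s : seq (elt n m)) (hs : linear_extension s) :
  homomesic (rowmotion s) (@SC n m) 0%R.
Proof.
move=> I ICI; rewrite (sum_orbit_eq0 (D := @interval_closed n m)) ?mul0r //.
- by move=> J; apply: toggles_closed.
- exact: rowmotion_inj.
- by move=> J ICJ; rewrite SC_rowmotion // rmorphN.
Qed.
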